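(* Fix $s\in(\tfrac12,1)$. For $k\in\mathbb{Z}$ and a positive integer $m$, let $\Lambda_m=k^2+\frac{m^2+(m+1)^2}{2}$. There exists a constant $C>0$ (independent of $k,l,m,\tau$) such that for all $k,l\in\mathbb{Z}$, all positive integers $m$ and all $\tau\in\mathbb{R}$: \[ \Big(l^2-\tfrac{m^2+(m+1)^2}{2}\Big)^2\ge C m^2; \] \[ \big|(i\tau+k^2+l^2-\Lambda_m)^{-1}\big|\le \frac{C}{\sqrt{m^2+\tau^2}}; \] \[ \big|(i\tau+k^2+l^2-\Lambda_m)^{-1}\big|\le \frac{C}{m^{1-s}|l|^{s}}\quad\text{whenever } l\neq 0; \] \[ \big|(i\tau+k^2-\Lambda_m)^{-1}\big|\le \frac{C}{\sqrt{\tau^2+m^4}}. \] *)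

From Stdlib Require Import Reals ZArith.
From Coquelicot Require Import Coquelicot.
Open Scope R_scope.

Definition Lambda (k : Z) (m : nat) : R :=
  IZR k ^ 2 + (INR m ^ 2 + INR (m + 1) ^ 2) / 2.

Definition itau_plus (tau a : R) : C := Cplus (Cmult Ci (RtoC tau)) (RtoC a).

(* The integer squares avoid the open interval (m^2, (m+1)^2), whose midpoint is
   mu_m = (m^2 + (m+1)^2)/2; hence a := l^2 - mu_m satisfies |a| >= m + 1/2 and,
   by the same case split on |l| <= m or |l| >= m + 1, |l| <= 2|a|.  Since
   |(i tau + a)^-1| = 1/sqrt(a^2 + tau^2) and sqrt(a^2 + tau^2) >= |a|, every
   bound follows; for the interpolated one, m^(1-s) |l|^s <= max(m, |l|) <= 2|a|.
   Without the l^2 term, a = -mu_m with mu_m >= m^2. *)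
From Stdlib Require Import Reals ZArith Lra Lia Psatz.
From Coquelicot Require Import Coquelicot.
Open Scope R_scope.

Definition mid_square (m : nat) : R := (INR m ^ 2 + INR (m + 1) ^ 2) / 2.

Lemma Lambda_mid_square (k : Z) (m : nat) : Lambda k m = IZR k ^ 2 + mid_square m.
Proof. reflexivity. Qed.

Lemma Cmod_itau_plus (tau a : R) : Cmod (itau_plus tau a) = sqrt (a ^ 2 + tau ^ 2).
Proof. unfold Cmod, itau_plus; simpl. f_equal. ring. Qed.

Lemma Cmod_inv_itau_plus_le (tau a D K : R) :
  0 < D -> D <= K * sqrt (a ^ 2 + tau ^ 2) -> Cmod (Cinv (itau_plus tau a)) <= K / D.
Proof.
  intros HD HDK.
  pose proof (sqrt_pos (a ^ 2 + tau ^ 2)) as Hs0.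
  assert (Hs : 0 < sqrt (a ^ 2 + tau ^ 2)).
  { destruct Hs0 as [Hs | Hs]; [exact Hs | rewrite <- Hs in HDK; lra]. }
  assert (HK : 0 < K) by nra.
  rewrite Cmod_inv, Cmod_itau_plus.
  - apply Rmult_le_reg_l with (sqrt (a ^ 2 + tau ^ 2) * D); [nra |].
    field_simplify; lra.
  - intro E. apply (f_equal Cmod) in E. rewrite Cmod_itau_plus, Cmod_0 in E. lra.
Qed.

Lemma Rabs_le_sqrt_sqr_plus (a b : R) : Rabs a <= sqrt (a ^ 2 + b ^ 2).
Proof. exact (Rle_trans _ _ _ (Rmax_l _ (Rabs b)) (proj1 (sqrt_plus_sqr a b))). Qed.

Lemma Cmod_inv_itau_plus_le_sqrt (tau a b K : R) :
  0 < b -> b <= a ^ 2 -> 1 <= K -> Cmod (Cinv (itau_plus tau a)) <= K / sqrt (b + tau ^ 2).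
Proof.
  intros Hb Hba HK.
  pose proof (pow2_ge_0 tau).
  apply Cmod_inv_itau_plus_le; [apply sqrt_lt_R0; lra |].
  assert (sqrt (b + tau ^ 2) <= sqrt (a ^ 2 + tau ^ 2)) by (apply sqrt_le_1_alt; lra).
  pose proof (sqrt_pos (b + tau ^ 2)). nra.
Qed.

Lemma Rpower_interpolate_le (x y s M : R) :
  0 <= s <= 1 -> 0 < x <= M -> 0 < y <= M -> Rpower x (1 - s) * Rpower y s <= M.
Proof.
  intros Hs Hx Hy.
  assert (Hxs : Rpower x (1 - s) <= Rpower M (1 - s)) by (apply Rle_Rpower_l; lra).
  assert (Hys : Rpower y s <= Rpower M s) by (apply Rle_Rpower_l; lra).
  assert (HM : Rpower M (1 - s) * Rpower M s = M).
  { rewrite <- Rpower_plus. replace (1 - s + s) with 1 by ring. apply Rpower_1. lra. }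
  assert (0 < Rpower x (1 - s)) by apply exp_pos.
  assert (0 < Rpower M s) by apply exp_pos.
  assert (0 < Rpower y s) by apply exp_pos.
  nra.
Qed.

Lemma Rabs_IZR_le_or_ge (l : Z) (m : nat) :
  Rabs (IZR l) <= INR m \/ INR m + 1 <= Rabs (IZR l).
Proof.
  rewrite <- abs_IZR, INR_IZR_INZ.
  destruct (Z_le_gt_dec (Z.abs l) (Z.of_nat m)) as [H | H].
  - left. apply IZR_le. exact H.
  - right. rewrite <- plus_IZR. apply IZR_le. lia.
Qed.

Lemma sqr_sub_mid_square_gap (l : Z) (m : nat) :
  INR m + 1 / 2 <= Rabs (IZR l ^ 2 - mid_square m) /\
  Rabs (IZR l) <= 2 * Rabs (IZR l ^ 2 - mid_square m).
Proof.
  unfold mid_square. rewrite <- pow2_abs, plus_INR. simpl (INR 1).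
  pose proof (pos_INR m).
  pose proof (Rabs_pos (IZR l)).
  destruct (Rabs_IZR_le_or_ge l m) as [Hle | Hge]; set (t := Rabs (IZR l)) in *.
  - rewrite Rabs_left by nra. split; nra.
  - rewrite Rabs_right by nra. split; nra.
Qed.

Lemma sqr_le_mid_square (m : nat) : INR m ^ 2 <= mid_square m.
Proof. unfold mid_square. rewrite plus_INR. simpl (INR 1). pose proof (pos_INR m). nra. Qed.

Lemma pow4_le_sqr_mid_square (m : nat) : INR m ^ 4 <= (- mid_square m) ^ 2.
Proof.
  replace (INR m ^ 4) with ((INR m ^ 2) ^ 2) by ring.
  replace ((- mid_square m) ^ 2) with (mid_square m ^ 2) by ring.
  apply pow_incr. split; [apply pow2_ge_0 | apply sqr_le_mid_square].
Qed.

Theorem lemma2p3 (s : R) (hs : 1 / 2 < s < 1) :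
  exists c C : R, 0 < c /\ 0 < C /\
    forall (k l : Z) (m : nat) (tau : R), (1 <= m)%nat ->
      (IZR l ^ 2 - (INR m ^ 2 + INR (m + 1) ^ 2) / 2) ^ 2 >= c * INR m ^ 2 /\
      Cmod (Cinv (itau_plus tau (IZR k ^ 2 + IZR l ^ 2 - Lambda k m)))
        <= C / sqrt (INR m ^ 2 + tau ^ 2) /\
      (l <> 0%Z ->
        Cmod (Cinv (itau_plus tau (IZR k ^ 2 + IZR l ^ 2 - Lambda k m)))
          <= C / (Rpower (INR m) (1 - s) * Rpower (Rabs (IZR l)) s)) /\
      Cmod (Cinv (itau_plus tau (IZR k ^ 2 - Lambda k m)))
        <= C / sqrt (tau ^ 2 + INR m ^ 4).
Proof.
  exists 1, 2. split; [lra |]. split; [lra |].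
  intros k l m tau Hm.
  rewrite Lambda_mid_square. change ((INR m ^ 2 + INR (m + 1) ^ 2) / 2) with (mid_square m).
  replace (IZR k ^ 2 + IZR l ^ 2 - (IZR k ^ 2 + mid_square m)) with (IZR l ^ 2 - mid_square m)
    by ring.
  replace (IZR k ^ 2 - (IZR k ^ 2 + mid_square m)) with (- mid_square m) by ring.
  set (a := IZR l ^ 2 - mid_square m).
  destruct (sqr_sub_mid_square_gap l m) as [Hgap Hl].
  fold a in Hgap, Hl.
  assert (Hm1 : 1 <= INR m) by exact (le_INR 1 m Hm).
  assert (Ha2 : INR m ^ 2 <= a ^ 2) by (rewrite <- (pow2_abs a); nra).
  assert (Ha : Rabs a <= sqrt (a ^ 2 + tau ^ 2)) by apply Rabs_le_sqrt_sqr_plus.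
  repeat split.
  - lra.
  - apply Cmod_inv_itau_plus_le_sqrt; nra.
  - intro Hl0.
    assert (Hl1 : 0 < Rabs (IZR l)) by (apply Rabs_pos_lt, not_0_IZR, Hl0).
    apply Cmod_inv_itau_plus_le.
    + apply Rmult_lt_0_compat; apply exp_pos.
    + apply Rle_trans with (2 * Rabs a); [apply Rpower_interpolate_le; lra | lra].
  - rewrite Rplus_comm.
    apply Cmod_inv_itau_plus_le_sqrt; [apply pow_lt; lra | apply pow4_le_sqr_mid_square | lra].
Qed.
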